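(* Let $0<\delta\le 1$. The mechanism $\mathcal{SA}_\delta$ admits a pure Nash equilibrium for every collection $A$, it is anonymous, and it is $\delta$-Pareto efficient in all equilibria, i.e., for every collection $A$ every pure Nash equilibrium outcome $x$ of $\Gamma_{\mathcal{SA}_\delta}(A)$ is $\delta$-Pareto efficient.
   Context: Two players bargain over a collection (multiset) of $n$ alternatives $A=(a^k)_{k\in[n]}$, $a^k\in[0,1]^2$, $a^k_i$ being player $i$'s utility. A mechanism is a sequence $(M_n)_n$, $M_n$ consisting of signal sets $\Sigma_1(n),\Sigma_2(n)$ and a map $f_n:\Sigma_1(n)\times\Sigma_2(n)\to\Delta([n])$; with risk-neutral players it induces a game $\Gamma_M(A)$ whose payoffs are expected utilities, and the outcome of a profile is its expected utility vector. A mechanism is anonymous if $\Sigma_1(n)=\Sigma_2(n)$ and $f_n(\sigma_1,\sigma_2)=f_n(\sigma_2,\sigma_1)$ for all $n,\sigma_1,\sigma_2$. The mechanism $\mathcal{SA}_\delta$: each player submits $L_i\subseteq[n]$; the index is drawn from $UN([n])$ if $L_1=L_2=\emptyset$; from $UN(L_1\cup L_2)$ if $L_1\cap L_2=\emptyset\ne L_1\cup L_2$; and from $(1-\delta)UN(L_1\cap L_2)+\delta\,UN(L_1\cup L_2)$ if $L_1\cap L_2\ne\emptyset$ ($UN$ = uniform distribution). An allocation $x\in[0,1]^2$ is $\varepsilon$-Pareto efficient (w.r.t. $A$) if there is no $a\in A$ with $a_1>x_1+\varepsilon$ and $a_2>x_2+\varepsilon$. *)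

From HB Require Import structures.
From mathcomp Require Import all_boot all_order all_algebra.
From mathcomp Require Import reals.
Set Implicit Arguments. Unset Strict Implicit. Unset Printing Implicit Defensive.
Import Order.TTheory GRing.Theory Num.Theory.
Local Open Scope ring_scope.

Section Defs.
Variable R : realType.

(* An alternative a^k in [0,1]^2 ; a collection of n alternatives is
   A : 'I_n -> R * R (a multiset, indexed by [n] = 'I_n). *)
Definition collection_ok n (A : 'I_n -> R * R) : Prop :=
  forall k, 0 <= (A k).1 <= 1 /\ 0 <= (A k).2 <= 1.

(* A mechanism: for each n, signal sets Sigma_1(n), Sigma_2(n) and
   f_n : Sigma_1(n) * Sigma_2(n) -> Delta([n]) (a distribution is given by
   its probability weights 'I_n -> R). *)
Record mechanism := Mechanism {
  sig1 : nat -> Type;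
  sig2 : nat -> Type;
  mech : forall n, sig1 n -> sig2 n -> 'I_n -> R }.

(* Anonymity: Sigma_1(n) = Sigma_2(n) and f_n symmetric. *)
Definition anonymous (M : mechanism) : Prop :=
  exists e : forall n, sig1 M n = sig2 M n,
    forall n (s t : sig1 M n),
      let c := fun x : sig1 M n => eq_rect (sig1 M n) (fun T => T) x (sig2 M n) (e n) in
      mech s (c t) = mech t (c s).

Definition payoff1 (M : mechanism) n (A : 'I_n -> R * R)
  (s1 : sig1 M n) (s2 : sig2 M n) : R :=
  \sum_(k < n) mech s1 s2 k * (A k).1.
Definition payoff2 (M : mechanism) n (A : 'I_n -> R * R)
  (s1 : sig1 M n) (s2 : sig2 M n) : R :=
  \sum_(k < n) mech s1 s2 k * (A k).2.

Definition outcome (M : mechanism) n (A : 'I_n -> R * R)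
  (s1 : sig1 M n) (s2 : sig2 M n) : R * R :=
  (payoff1 A s1 s2, payoff2 A s1 s2).

Definition pure_NE (M : mechanism) n (A : 'I_n -> R * R)
  (s1 : sig1 M n) (s2 : sig2 M n) : Prop :=
  (forall s1' : sig1 M n, payoff1 A s1' s2 <= payoff1 A s1 s2) /\
  (forall s2' : sig2 M n, payoff2 A s1 s2' <= payoff2 A s1 s2).

Definition eps_pareto (eps : R) n (A : 'I_n -> R * R) (x : R * R) : Prop :=
  ~ exists k : 'I_n, x.1 + eps < (A k).1 /\ x.2 + eps < (A k).2.

Definition UN n (S : {set 'I_n}) (k : 'I_n) : R :=
  if k \in S then (#|S|%:R)^-1 else 0.

Definition SA_f (delta : R) n (L1 L2 : {set 'I_n}) (k : 'I_n) : R :=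
  if (L1 == set0) && (L2 == set0) then UN [set: 'I_n] k
  else if L1 :&: L2 == set0 then UN (L1 :|: L2) k
  else (1 - delta) * UN (L1 :&: L2) k + delta * UN (L1 :|: L2) k.

Definition SA (delta : R) : mechanism :=
  @Mechanism (fun n => {set 'I_n}) (fun n => {set 'I_n}) (@SA_f delta).

End Defs.

(* Efficiency: suppose an alternative k gives each player more than delta above
   her equilibrium payoff.  Proposing {k} gives player 1 the value f k if
   L2 = set0 and at least f k - delta if k \in L2, so L2 != set0 and k \notin L2.
   Proposing L1 :\: L2 gives her avg (L1 :|: L2), so this average is below f k;
   hence if k \notin L1, adding k to L1 strictly raises the average over the
   union without changing the intersection.  Thus k \in L1 :\: L2, and
   symmetrically k \in L2 :\: L1.

   Existence: take U minimal nonempty such that no alternative outside U beats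
   the U-average of either player; by minimality each element of U is at least
   average for some player.  Player 1 proposes the elements of U she rates at
   least average, player 2 the others, and both add the element of U that is
   above average for both players and best for player 2, if there is one.
   Against such a proposal M, any L gives avg (L :|: M) <= avg U and an
   intersection inside M, which bounds every deviation by the current payoff. *)

From mathcomp Require Import all_boot all_order all_algebra reals.
From mathcomp Require Import lra.
Import Order.TTheory GRing.Theory Num.Theory.
Local Open Scope ring_scope.
Set Implicit Arguments. Unset Strict Implicit.

Section Average.
Variables (T : finType) (R : realFieldType).
Implicit Types (S U : {set T}) (f : T -> R).

Definition avg S f : R := (\sum_(j in S) f j) / #|S|%:R.

Lemma card_gt0R S : S != set0 -> 0 < #|S|%:R :> R.
Proof. by move=> S0; rewrite ltr0n card_gt0. Qed.

Lemma sum_avg S f : S != set0 -> \sum_(j in S) f j = avg S f * #|S|%:R.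
Proof. by move=> S0; rewrite /avg mulfVK // gt_eqF ?card_gt0R. Qed.

Lemma avg_set1 k f : avg [set k] f = f k.
Proof. by rewrite /avg big_set1 cards1 divr1. Qed.

Lemma avg_ge0 S f : (forall j, 0 <= f j) -> 0 <= avg S f.
Proof. by move=> f0; rewrite divr_ge0 ?sumr_ge0. Qed.

Lemma avg_le S f m : S != set0 -> {in S, forall j, f j <= m} -> avg S f <= m.
Proof.
move=> S0 fm; rewrite ler_pdivrMr ?card_gt0R //.
by apply: le_trans (ler_sum _ fm) _; rewrite sumr_const mulr_natr.
Qed.

Lemma avg_lt S f m : S != set0 -> {in S, forall j, f j < m} -> avg S f < m.
Proof.
move=> S0 fm; rewrite ltr_pdivrMr ?card_gt0R //.
have [j jS] := set0Pn _ S0.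
apply: lt_le_trans (ltr_sum _ fm) _; last by rewrite sumr_const mulr_natr.
by apply/hasP; exists j; rewrite ?mem_index_enum.
Qed.

Lemma avg_setU1 k S f : k \notin S -> S != set0 ->
  avg (k |: S) f * (#|S|%:R + 1) = f k + avg S f * #|S|%:R.
Proof.
move=> kS S0; have kS0 : k |: S != set0 by apply/set0Pn; exists k; rewrite setU11.
have -> : #|S|%:R + 1 = #|k |: S|%:R :> R by rewrite cardsU1 kS natrD addrC.
by rewrite -!sum_avg // big_setU1.
Qed.

Lemma avg_setU1_gt k S f : k \notin S -> S != set0 ->
  avg S f < f k -> avg S f < avg (k |: S) f.
Proof.
move=> kS S0 ltSk; have := avg_setU1 f kS S0; have := card_gt0R S0; nra.
Qed.

Lemma avg_setD1_gt u U f : u \in U -> U :\ u != set0 ->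
  f u < avg U f -> avg U f < avg (U :\ u) f.
Proof.
move=> uU U0; have uU' : u \notin U :\ u by rewrite setD11.
have := avg_setU1 f uU' U0; rewrite setD1K //.
have := card_gt0R U0; nra.
Qed.

Lemma avg_le_avg S U f : S != set0 -> U != set0 ->
  {in S :\: U, forall j, f j <= avg U f} ->
  {in U :\: S, forall j, avg U f <= f j} ->
  avg S f <= avg U f.
Proof.
move=> S0 U0 fSU fUS; set t := avg U f.
have sumU : \sum_(j in U) (f j - t) = 0.
  by rewrite sumrB sumr_const -mulr_natr -sum_avg // subrr.
suff : \sum_(j in S) (f j - t) <= 0.
  by rewrite sumrB sumr_const -mulr_natr subr_le0 -ler_pdivrMr ?card_gt0R.
rewrite -[X in X <= _]subr0 -[X in _ - X]sumU !(big_mkcond (fun j => j \in _)) -sumrB /=.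
apply: sumr_le0 => j _; case: (boolP (j \in S)) => jS; case: (boolP (j \in U)) => jU.
- by rewrite subrr.
- by rewrite subr0 subr_le0 fSU // inE jS jU.
- by rewrite sub0r oppr_le0 subr_ge0 fUS // inE jS jU.
- by rewrite subrr.
Qed.

End Average.

Lemma sum_UN (R : realType) n (S : {set 'I_n}) (f : 'I_n -> R) :
  \sum_k UN R S k * f k = avg S f.
Proof.
rewrite /avg /UN mulr_suml [RHS]big_mkcond /=; apply: eq_bigr => k _.
by case: (k \in S); rewrite ?mul0r // mulrC.
Qed.

Section Payoff.
Variables (R : realType) (delta : R) (n : nat).
Implicit Types (L M U : {set 'I_n}) (f : 'I_n -> R).

Definition pay L M f : R := \sum_k SA_f delta L M k * f k.

Definition best_response f L M : Prop :=
  forall L', pay L' M f <= pay L M f.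

Lemma SA_fC L M : SA_f delta L M = SA_f delta M L.
Proof. by rewrite /SA_f setIC setUC andbC. Qed.

Lemma payC L M f : pay L M f = pay M L f.
Proof. by rewrite /pay SA_fC. Qed.

Lemma payE L M f : pay L M f =
  if (L == set0) && (M == set0) then avg [set: 'I_n] f
  else if L :&: M == set0 then avg (L :|: M) f
  else (1 - delta) * avg (L :&: M) f + delta * avg (L :|: M) f.
Proof.
rewrite /pay /SA_f; case: ifP => _; first exact: sum_UN.
case: ifP => _; first exact: sum_UN.
under eq_bigr => k _ do rewrite mulrDl -!mulrA.
by rewrite big_split -!mulr_sumr !sum_UN.
Qed.

Lemma pay_nonempty L M f : M != set0 -> pay L M f =
  if L :&: M == set0 then avg (L :|: M) f
  else (1 - delta) * avg (L :&: M) f + delta * avg (L :|: M) f.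
Proof. by move=> Mn; rewrite payE (negbTE Mn) andbF. Qed.

Lemma set1_neq0 (k : 'I_n) : [set k] != set0.
Proof. by apply/set0Pn; exists k; rewrite set11. Qed.

Lemma pay_set1_set0 k f : pay [set k] set0 f = f k.
Proof. by rewrite payE (negbTE (set1_neq0 k)) setI0 eqxx setU0 avg_set1. Qed.

Lemma pay_setD L M f : M != set0 -> pay (L :\: M) M f = avg (L :|: M) f.
Proof.
move=> Mn; rewrite pay_nonempty //.
have -> : (L :\: M) :&: M = set0.
  by apply/setP => j; rewrite !inE; case: (j \in M); rewrite ?andbF.
by rewrite eqxx setDE setUIl [~: M :|: M]setUC setUCr setIT.
Qed.

Lemma pay_setI1 c L M f : L :&: M = [set c] ->
  pay L M f = (1 - delta) * f c + delta * avg (L :|: M) f.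
Proof.
move=> LMc; have Mn : M != set0.
  by apply/set0Pn; exists c; move/setP: LMc => /(_ c); rewrite !inE eqxx => /andP[].
by rewrite pay_nonempty // LMc (negbTE (set1_neq0 c)) avg_set1.
Qed.

Hypothesis delta_gt0 : 0 < delta.

Lemma pay_set1_mem k M f : (forall j, 0 <= f j <= 1) -> k \in M ->
  f k - delta <= pay [set k] M f.
Proof.
move=> f01 kM; have Mn : M != set0 by apply/set0Pn; exists k.
rewrite pay_nonempty //.
have -> : [set k] :&: M = [set k] by apply/setIidPl; rewrite sub1set.
rewrite (negbTE (set1_neq0 k)) avg_set1.
have f0 j : 0 <= f j by case/andP: (f01 j).
have := avg_ge0 ([set k] :|: M) f0; have /andP[_ fk1] := f01 k.
have := delta_gt0; nra.
Qed.

Lemma pay_setU1_gt k L M f : M != set0 -> k \notin L :|: M ->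
  avg (L :|: M) f < f k -> pay L M f < pay (k |: L) M f.
Proof.
move=> Mn kU ltUk; have U0 : L :|: M != set0.
  by apply: contraNneq Mn => /eqP; rewrite setU_eq0 => /andP[_].
have := avg_setU1_gt kU U0 ltUk; rewrite !pay_nonempty // -setUA.
have -> : (k |: L) :&: M = L :&: M.
  rewrite setIUl; apply/setUidPr/subsetP => j; rewrite !inE => /andP[/eqP-> kM].
  by move: kU; rewrite !inE kM orbT.
by have := delta_gt0; case: ifP => _; nra.
Qed.

Lemma best_response_mem k L M f : (forall j, 0 <= f j <= 1) ->
  best_response f L M -> pay L M f + delta < f k -> k \in L :\: M.
Proof.
move=> f01 br gain.
have Mn : M != set0.
  apply: contraTneq gain => M0; rewrite -leNgt.
  by have := br [set k]; rewrite M0 pay_set1_set0; have := delta_gt0; lra.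
have kM : k \notin M.
  apply: contraTN gain => kM; rewrite -leNgt.
  by have := br [set k]; have := pay_set1_mem f01 kM; lra.
rewrite inE kM /=; apply: contraTT gain => kL; rewrite -leNgt.
have kU : k \notin L :|: M by rewrite inE negb_or kL.
have le_kU : f k <= avg (L :|: M) f.
  by rewrite leNgt; apply/negP => /(pay_setU1_gt Mn kU); rewrite ltNge br.
by have := br (L :\: M); rewrite pay_setD //; have := delta_gt0; lra.
Qed.

Hypothesis delta_le1 : delta <= 1.

Lemma pay_ub f M U (m V : R) : M != set0 -> M \subset U ->
  {in M, forall j, f j <= m} ->
  {in ~: U, forall j, f j <= avg U f} ->
  {in U :\: M, forall j, avg U f <= f j} ->
  avg U f <= V -> (1 - delta) * m + delta * avg U f <= V ->
  forall L, pay L M f <= V.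
Proof.
move=> Mn sMU fM fout fin UV mUV L.
have U0 : U != set0 by apply: contraNneq Mn => U0; rewrite -subset0 -U0.
have LM0 : L :|: M != set0 by rewrite setU_eq0 negb_and Mn orbT.
have LMU : avg (L :|: M) f <= avg U f.
  apply: avg_le_avg => // j; rewrite !inE.
    by case/andP=> jU _; apply: fout; rewrite inE.
  case/andP; rewrite negb_or => /andP[_ jM] jU.
  by apply: fin; rewrite inE jM.
rewrite pay_nonempty //; case: ifP => [_|LMI]; first exact: le_trans UV.
apply: le_trans mUV; apply: lerD; last by rewrite ler_wpM2l ?(ltW delta_gt0).
rewrite ler_wpM2l ?subr_ge0 //; apply: avg_le; first by rewrite LMI.
by move=> j; rewrite inE => /andP[_ /fM].
Qed.

End Payoff.

Section Equilibrium.
Variables (R : realType) (delta : R) (n : nat) (f1 f2 : 'I_n -> R).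
Hypotheses (delta_gt0 : 0 < delta) (delta_le1 : delta <= 1).

Definition stable (U : {set 'I_n}) : bool := (U != set0) &&
  [forall j, (j \notin U) ==> (f1 j <= avg U f1) && (f2 j <= avg U f2)].

Lemma exists_stable_core : (0 < n)%N -> exists U, stable U /\
  {in U, forall u, avg U f1 <= f1 u \/ avg U f2 <= f2 u}.
Proof.
move=> n_gt0; have stT : stable setT.
  rewrite /stable; apply/andP; split; last by apply/forallP => j; rewrite inE.
  by apply/set0Pn; exists (Ordinal n_gt0); rewrite inE.
have [U stU Umin] := arg_minnP (fun U : {set 'I_n} => #|U|) stT.
exists U; split => // u uU.
have [|lt1] := leP (avg U f1) (f1 u); first by left.
have [|lt2] := leP (avg U f2) (f2 u); first by right.
exfalso.
move: stU => /andP[U0 /forallP Uout].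
have Uu0 : U :\ u != set0.
  by apply: contraTneq lt1 => Uu0; rewrite -(setD1K uU) Uu0 setU0 avg_set1 ltxx.
have gt1 := avg_setD1_gt uU Uu0 lt1; have gt2 := avg_setD1_gt uU Uu0 lt2.
have stUu : stable (U :\ u).
  rewrite /stable Uu0; apply/forallP => j; apply/implyP.
  rewrite !inE negb_and negbK; case: (eqVneq j u) => [->|_] /= jU.
    by rewrite !ltW ?(lt_trans lt1 gt1) ?(lt_trans lt2 gt2).
  have /andP[h1 h2] := implyP (Uout j) jU.
  by rewrite (le_trans h1 (ltW gt1)) (le_trans h2 (ltW gt2)).
by have := Umin _ stUu; rewrite (cardsD1 u U) uU ltnn.
Qed.

Section Core.
Variable U : {set 'I_n}.
Hypotheses (stableU : stable U)
  (coreU : {in U, forall u, avg U f1 <= f1 u \/ avg U f2 <= f2 u}).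

Let t1 := avg U f1.
Let t2 := avg U f2.
Let A := [set j in U | t1 <= f1 j].
Let B := [set j in U | f1 j < t1].

Let U_AB : U = A :|: B.
Proof. by apply/setP => j; rewrite !inE -andb_orr; case: leP; rewrite ?andbT. Qed.

Let out1 : {in ~: U, forall j, f1 j <= t1}.
Proof.
move=> j; rewrite inE => jU; case/andP: stableU => _ /forallP/(_ j).
by rewrite jU => /andP[].
Qed.

Let out2 : {in ~: U, forall j, f2 j <= t2}.
Proof.
move=> j; rewrite inE => jU; case/andP: stableU => _ /forallP/(_ j).
by rewrite jU => /andP[].
Qed.

Let in1 : {in U :\: B, forall j, t1 <= f1 j}.
Proof. by move=> j; rewrite !inE => /andP[+ jU]; rewrite jU -leNgt. Qed.

Let in2 : {in U :\: A, forall j, t2 <= f2 j}.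
Proof.
move=> j; rewrite !inE => /andP[+ jU]; rewrite jU -ltNge => lt1.
by case: (coreU jU) => //; rewrite leNgt lt1.
Qed.

Lemma best_responses_top c : c \in U -> t1 <= f1 c -> t2 <= f2 c ->
  (forall j, j \in U -> t1 <= f1 j -> t2 <= f2 j -> f2 j <= f2 c) ->
  best_response delta f1 A (c |: B) /\ best_response delta f2 (c |: B) A.
Proof.
move=> cU c1 c2 cmax.
have A_c : c \in A by rewrite inE cU c1.
have I_c : A :&: (c |: B) = [set c].
  apply/setP => j; rewrite !inE; case: (eqVneq j c) => [->|_] /=; first by rewrite cU c1.
  by case: (j \in U); case: leP.
have U_c : A :|: (c |: B) = U.
  by rewrite setUCA -U_AB; apply/setUidPr; rewrite sub1set.
have An : A != set0 by apply/set0Pn; exists c.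
have cBn : c |: B != set0 by apply/set0Pn; exists c; rewrite setU11.
have d0 := delta_gt0; have d1 := delta_le1.
split => L.
- rewrite [X in _ <= X](pay_setI1 delta f1 I_c) U_c.
  apply: (pay_ub (U := U) (m := f1 c) delta_gt0 delta_le1 cBn) => //.
  + by rewrite -U_c subsetUr.
  + move=> j; rewrite !inE => /orP[/eqP-> // | /andP[_ lt1]].
    exact: ltW (lt_le_trans lt1 c1).
  + move=> j /setDP[jU]; rewrite inE negb_or => /andP[_ jB].
    by apply: in1; rewrite inE jB.
  + rewrite -/t1; nra.
- rewrite [X in _ <= X]payC [X in _ <= X](pay_setI1 delta f2 I_c) U_c.
  apply: (pay_ub (U := U) (m := f2 c) delta_gt0 delta_le1 An) => //.
  + by rewrite -U_c subsetUl.
  + move=> j; rewrite inE => /andP[jU j1].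
    by have [/(cmax j jU j1) //|lt2] := leP t2 (f2 j); exact: ltW (lt_le_trans lt2 c2).
  + rewrite -/t2; nra.
Qed.

Lemma best_responses_no_top :
  (forall j, j \in U -> t1 <= f1 j -> f2 j < t2) ->
  best_response delta f1 A B /\ best_response delta f2 B A.
Proof.
move=> no_top; have U0 : U != set0 by case/andP: stableU.
have I0 : A :&: B = set0.
  by apply/setP => j; rewrite !inE; case: (j \in U); case: leP.
have An : A != set0.
  apply/negP => /eqP A0; have : t1 < t1; last by rewrite ltxx.
  apply: avg_lt => // j jU; move/setP: A0 => /(_ j).
  by rewrite !inE jU /= => /negbT; rewrite -ltNge.
have Bn : B != set0.
  apply/negP => /eqP B0; have : t2 < t2; last by rewrite ltxx.
  apply: avg_lt => // j jU; apply: no_top => //; move/setP: B0 => /(_ j).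
  by rewrite !inE jU /= => /negbT; rewrite -leNgt.
have mix_le (t : R) : (1 - delta) * t + delta * t <= t by rewrite mulrBl mul1r subrK.
split => L.
- rewrite [X in _ <= X]pay_nonempty // I0 eqxx -U_AB.
  apply: (pay_ub (U := U) (m := t1) delta_gt0 delta_le1 Bn) => //.
    by rewrite U_AB subsetUr.
  by move=> j; rewrite inE => /andP[_ /ltW].
- rewrite [X in _ <= X]payC [X in _ <= X]pay_nonempty // I0 eqxx -U_AB.
  apply: (pay_ub (U := U) (m := t2) delta_gt0 delta_le1 An) => //.
    by rewrite U_AB subsetUl.
  by move=> j; rewrite inE => /andP[jU /(no_top j jU)/ltW].
Qed.

End Core.

Lemma best_responses_exist : (0 < n)%N ->
  exists L M, best_response delta f1 L M /\ best_response delta f2 M L.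
Proof.
move=> n_gt0; have [U [stU coreU]] := exists_stable_core n_gt0.
pose top := [pred j | [&& j \in U, avg U f1 <= f1 j & avg U f2 <= f2 j]].
have [c0 top_c0|no_top] := pickP top.
  have [c /and3P[cU c1 c2] cmax] := @arg_maxP _ _ _ c0 top f2 top_c0.
  do 2 eexists; apply: (best_responses_top stU coreU cU c1 c2) => j jU j1 j2.
  by apply: cmax; rewrite /= jU j1 j2.
do 2 eexists; apply: (best_responses_no_top stU coreU) => j jU j1.
by move: (no_top j); rewrite /= jU j1 /= ltNge => ->.
Qed.

End Equilibrium.

Lemma pure_NE_SA (R : realType) (delta : R) n (A : 'I_n -> R * R)
    (L M : {set 'I_n}) :
  @pure_NE R (SA delta) n A L M <->
  best_response delta (fun k => (A k).1) L M /\
  best_response delta (fun k => (A k).2) M L.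
Proof.
split=> -[br1 br2]; split=> // L'.
- by rewrite payC [X in _ <= X]payC; apply: br2.
- by have := br2 L'; rewrite payC [X in _ <= X]payC.
Qed.

Theorem corollary2 (R : realType) (delta : R) :
  0 < delta <= 1 ->
  (forall (n : nat) (A : 'I_n -> R * R), (0 < n)%N -> collection_ok A ->
     exists (L1 L2 : {set 'I_n}), @pure_NE R (SA delta) n A L1 L2) /\
  anonymous (SA delta) /\
  (forall (n : nat) (A : 'I_n -> R * R), (0 < n)%N -> collection_ok A ->
     forall L1 L2 : {set 'I_n}, @pure_NE R (SA delta) n A L1 L2 ->
       eps_pareto delta A (@outcome R (SA delta) n A L1 L2)).
Proof.
move=> /andP[delta_gt0 delta_le1]; split; [|split].
- move=> n A n_gt0 _.
  have [L [M br]] := best_responses_exist (fun k => (A k).1) (fun k => (A k).2)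
    delta_gt0 delta_le1 n_gt0.
  by exists L, M; apply/pure_NE_SA.
- by exists (fun=> erefl) => n L M /=; rewrite SA_fC.
- move=> n A _ A01 L M /pure_NE_SA[br1 br2] [k [gain1 gain2]].
  have A01_1 j : 0 <= (A j).1 <= 1 by case: (A01 j).
  have A01_2 j : 0 <= (A j).2 <= 1 by case: (A01 j).
  have := best_response_mem delta_gt0 A01_1 br1 gain1.
  have gain2' : pay delta M L (fun j => (A j).2) + delta < (A k).2 by rewrite payC.
  have := best_response_mem delta_gt0 A01_2 br2 gain2'.
  by rewrite !inE => /andP[/negPf-> _] /andP[].
Qed.
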